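(* Let $\langle X,\tau,T\rangle$ be a conditional space and $\mathrm{Cm}=\langle\mathcal{P}(X),\to_T\rangle$ its full complex algebra. With $x,y,z$ ranging over $X$ and $Y,Z$ over closed subsets of $X$, and the inequalities in $\mathrm{Cm}$ holding for all elements: (T3* ) $(a\to c)\wedge(b\to c)\le(a\vee b)\to c$ holds in $\mathrm{Cm}$ iff for all $x,y$ and nonempty $Y$, $T(x,Y,y)$ implies there is $z\in Y$ with $T(x,\{z\},y)$; (T4) $a\to b\le c\to(a\to b)$ holds in $\mathrm{Cm}$ iff $T(x,Y,y)$ and $T(y,Z,z)$ imply $T(x,Z,z)$; (T5) $a\wedge(a\to b)\le b$ holds in $\mathrm{Cm}$ iff $T(x,\{x\},x)$ for all $x$; (T6) $a\to b\le\neg b\to\neg a$ holds in $\mathrm{Cm}$ iff $T(x,Y,y)$ implies there is $z\in Y$ with $T(x,\{y\},z)$; (T7) $\neg(a\to b)\le c\to\neg(a\to b)$ holds in $\mathrm{Cm}$ iff $T(x,Y,y)$ and $T(x,Z,z)$ imply $T(y,Z,z)$; (T8) $(1\to(\neg a\vee b))\wedge(b\to c)\le a\to c$ holds in $\mathrm{Cm}$ iff for all $x,y,Y,Z$: $T(x,Y,y)$ and $T(x,X)\cap Y\subseteq Z$ imply $T(x,Z,y)$.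
   Context: A conditional space is $\langle X,\tau,T\rangle$ with $\langle X,\tau\rangle$ a Boolean (compact, Hausdorff, zero-dimensional) space and $T\subseteq X\times\mathcal{C}(\tau)\times X$ ($\mathcal{C}(\tau)$ the closed sets) satisfying: (T1) $T(x,Y)=\{y:T(x,Y,y)\}$ is closed for all $x$ and closed $Y$; (T2) for clopen $U,V$, $U\to_T V$ is clopen; (T3) for closed $Y$, $T(x,Y,y)$ iff $T(x,U,y)$ for all clopen $U\supseteq Y$. For any $U,V\subseteq X$, $U\to_T V=\{x\in X:\text{for all closed } Z\subseteq U,\ T(x,Z)\subseteq V\}$. In $\mathrm{Cm}$, $\wedge,\vee,\neg,1$ are intersection, union, complement and $X$. *)

From HB Require Import structures.
From mathcomp Require Import all_boot all_order.
From mathcomp Require Import all_classical topology.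
Set Implicit Arguments. Unset Strict Implicit. Unset Printing Implicit Defensive.
Local Open Scope classical_set_scope.

Definition clopen_base (X : topologicalType) : Prop :=
  forall (x : X) (U : set X), open U -> U x ->
    exists V : set X, [/\ clopen V, V x & V `<=` U].

Definition boolean_space (X : topologicalType) : Prop :=
  [/\ compact [set: X], hausdorff_space X & clopen_base X].

(* The ternary relation T ⊆ X × C(τ) × X is encoded as a predicate
   T x Y y; the first condition says it only relates closed middle arguments. *)
Definition Tsec (X : Type) (T : X -> set X -> X -> Prop) (x : X) (Y : set X)
  : set X := [set y | T x Y y].

Definition Tarrow (X : topologicalType) (T : X -> set X -> X -> Prop)
  (U V : set X) : set X :=
  [set x | forall Z : set X, closed Z -> Z `<=` U -> Tsec T x Z `<=` V].

Definition conditional_relation (X : topologicalType)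
  (T : X -> set X -> X -> Prop) : Prop :=
  [/\ (forall x Y y, T x Y y -> closed Y),
      (forall x (Y : set X), closed Y -> closed (Tsec T x Y)),
      (forall U V : set X, clopen U -> clopen V -> clopen (Tarrow T U V)) &
      (forall x (Y : set X) y, closed Y ->
         (T x Y y <-> forall U : set X, clopen U -> Y `<=` U -> T x U y))].

Definition conditional_space (X : topologicalType)
  (T : X -> set X -> X -> Prop) : Prop :=
  boolean_space X /\ conditional_relation T.

From HB Require Import structures.
From mathcomp Require Import all_boot all_order.
From mathcomp Require Import all_classical topology.
Local Open Scope classical_set_scope.

(* Each correspondence is proved by instantiating the inequality at the
   sets for which it is tight: a := Y with b := T(x,Y), since
   x ∈ Y ->_T T(x,Y), or b := ~{y}, since for closed U we have
   x ∈ U ->_T ~{y} iff not T(x,U,y).  Only (T3-star) needs more topology than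
   the closedness of points: by (T3) each z ∈ Y with not T(x,{z},y) lies in
   a clopen U with x ∈ U ->_T ~{y}; the inequality makes the sets U with this
   property closed under finite unions, so compactness of Y yields
   x ∈ Y ->_T ~{y}, i.e. not T(x,Y,y). *)

Lemma compact_local_ideal {X : topologicalType} {P : set X -> Prop}
    {Y : set X} :
  compact Y -> Y !=set0 ->
  (forall A B, P A -> P B -> P (A `|` B)) ->
  (forall A B, A `<=` B -> P B -> P A) ->
  (forall z, Y z -> exists2 U, nbhs z U & P U) ->
  P Y.
Proof.
move=> cptY [z0 Yz0] PU PS Ploc; apply: contrapT => nPY.
have [U0 _ PU0] := Ploc z0 Yz0.
pose F := filter_from P (fun G => Y `\` G).
have FF : ProperFilter F.
  apply: filter_from_proper.
    apply: filter_from_filter; first by exists U0.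
    move=> G1 G2 PG1 PG2; exists (G1 `|` G2); first exact: PU.
    by move=> w [Yw nG]; split; split => // ?; apply: nG; [left|right].
  move=> G PG; apply: contrapT => YG; apply/nPY/(PS _ _ _ PG) => w Yw.
  by apply: contrapT => nGw; apply: YG; exists w.
have FY : F Y by exists U0 => // w [].
have [p [Yp clp]] := cptY F FF FY.
have [Up nUp PUp] := Ploc p Yp.
have FYUp : F (Y `\` Up) by exists Up.
by have [w [[_ nUw] Uw]] := clp _ _ FYUp nUp.
Qed.

Section ConditionalRelation.
Variables (X : topologicalType) (T : X -> set X -> X -> Prop).

Lemma subset_Tarrowl {A B C : set X} :
  A `<=` B -> Tarrow T B C `<=` Tarrow T A C.
Proof. by move=> AB x BCx Z cZ ZA; apply: BCx _ cZ (subset_trans ZA AB). Qed.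

Hypothesis relT : conditional_relation T.

Lemma T_closed {x Y y} : T x Y y -> closed Y.
Proof. by case: relT => + _ _ _; apply. Qed.

Lemma Tsec_closed x (Y : set X) : closed Y -> closed (Tsec T x Y).
Proof. by case: relT => _ + _ _; apply. Qed.

Lemma T_subset {x} {Y Y' : set X} {y} :
  closed Y' -> Y `<=` Y' -> T x Y y -> T x Y' y.
Proof.
move=> cY' YY' Txy; have cY := T_closed Txy.
case: relT => _ _ _ T3; apply/(T3 _ _ _ cY') => U cU Y'U.
by apply: (T3 _ _ _ cY).1 Txy U cU (subset_trans YY' Y'U).
Qed.

Lemma not_T_clopen {x} {Y : set X} {y} :
  closed Y -> ~ T x Y y -> exists U, [/\ clopen U, Y `<=` U & ~ T x U y].
Proof.
move=> cY nTxy; apply: contrapT => noU; apply: nTxy.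
case: relT => _ _ _ T3; apply/(T3 _ _ _ cY) => U cU YU.
by apply: contrapT => nTU; apply: noU; exists U.
Qed.

Lemma Tarrow_Tsec {x} {Y : set X} : closed Y -> Tarrow T Y (Tsec T x Y) x.
Proof. by move=> cY Z cZ ZY w Txw; apply: T_subset cY ZY Txw. Qed.

Lemma Tarrow_setC1 x {Y : set X} y :
  closed Y -> Tarrow T Y (~` [set y]) x <-> ~ T x Y y.
Proof.
move=> cY; split=> [YCx Txy | nTxy Z cZ ZY w Txw wy].
  exact: YCx _ cY (@subset_refl _ _) y Txy erefl.
by rewrite wy in Txw; apply/nTxy/(T_subset cY ZY).
Qed.

Lemma T4_valid_iff :
  (forall a b c : set X, Tarrow T a b `<=` Tarrow T c (Tarrow T a b))
   <-> (forall (x y z : X) (Y Z : set X), closed Y -> closed Z ->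
          T x Y y -> T y Z z -> T x Z z).
Proof.
split=> [H x y z Y Z cY cZ Txy Tyz | H a b c x abx Y cY Yc y Txy Z cZ Za z Tyz].
  exact: (H Z _ Y x (Tarrow_Tsec cZ) Y cY (@subset_refl _ _) y Txy
            Z cZ (@subset_refl _ _) z Tyz).
exact: abx _ cZ Za z (H x y z Y Z cY cZ Txy Tyz).
Qed.

Lemma T7_valid_iff :
  (forall a b c : set X, ~` Tarrow T a b `<=` Tarrow T c (~` Tarrow T a b))
   <-> (forall (x y z : X) (Y Z : set X), closed Y -> closed Z ->
          T x Y y -> T x Z z -> T y Z z).
Proof.
split=> [H x y z Y Z cY cZ Txy Txz | H a b c x nabx Y cY Yc y Txy aby].
  apply: contrapT => nTyz.
  have nZx : ~ Tarrow T Z (~` [set z]) x by move/(Tarrow_setC1 _ _ cZ).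
  exact: (H Z _ Y x nZx Y cY (@subset_refl _ _) y Txy
            ((Tarrow_setC1 _ _ cZ).2 nTyz)).
by apply: nabx => Z cZ Za z Txz; apply: aby _ cZ Za z (H x y z Y Z cY cZ Txy Txz).
Qed.

Lemma T8_valid_iff :
  (forall a b c : set X,
      Tarrow T setT (~` a `|` b) `&` Tarrow T b c `<=` Tarrow T a c)
   <-> (forall (x y : X) (Y Z : set X), closed Y -> closed Z ->
          T x Y y -> Tsec T x setT `&` Y `<=` Z -> T x Z y).
Proof.
split=> [H x y Y Z cY cZ Txy TYZ | H a b c x [Tx bcx] Y cY Ya y Txy].
  apply: (H Y Z (Tsec T x Z) x _ Y cY (@subset_refl _ _) y Txy).
  split; last exact: Tarrow_Tsec.
  move=> W cW _ w Txw; have [Yw|nYw] := pselect (Y w); last by left.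
  by right; apply: TYZ; split=> //; apply: T_subset closedT _ Txw.
have cZ : closed (Tsec T x setT `&` Y) by apply: closedI => //; apply: Tsec_closed.
apply: (bcx _ cZ _ y (H x y Y _ cY cZ Txy (@subset_refl _ _))) => w [Tw Yw].
by case: (Tx setT closedT (@subset_refl _ _) w Tw) => // /(_ (Ya w Yw)).
Qed.

Hypothesis closed1 : forall z : X, closed [set z].

Lemma Tarrow_set1 {a b : set X} {x z y} :
  Tarrow T a b x -> a z -> T x [set z] y -> b y.
Proof.
move=> abx az Txy; have za : [set z] `<=` a by move=> _ ->.
exact: abx _ (closed1 z) za y Txy.
Qed.

Lemma T5_valid_iff :
  (forall a b : set X, a `&` Tarrow T a b `<=` b)
   <-> (forall x : X, T x [set x] x).
Proof.
split=> [H x | H a b x [ax abx]].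
  by apply: (H [set x] (Tsec T x [set x])); split=> //; apply: Tarrow_Tsec.
exact: Tarrow_set1 abx ax (H x).
Qed.

Lemma T6_valid_iff :
  (forall a b : set X, Tarrow T a b `<=` Tarrow T (~` b) (~` a))
   <-> (forall (x y : X) (Y : set X), closed Y ->
          T x Y y -> exists2 z, Y z & T x [set y] z).
Proof.
split=> [H x y Y cY Txy | H a b x abx Z cZ Zb w Txw aw].
  apply: contrapT => noz.
  have YC : Y `<=` ~` Tsec T x [set y] by move=> z Yz Tz; apply: noz; exists z.
  exact: H _ _ x (Tarrow_Tsec (closed1 y)) Y cY YC y Txy erefl.
have [z Zz Txz] := H x w Z cZ Txw.
exact: Zb z Zz (Tarrow_set1 abx aw Txz).
Qed.

Hypothesis compactX : compact [set: X].

Lemma T3star_valid_iff :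
  (forall a b c : set X,
      Tarrow T a c `&` Tarrow T b c `<=` Tarrow T (a `|` b) c)
   <-> (forall (x y : X) (Y : set X), closed Y -> Y !=set0 ->
          T x Y y -> exists2 z, Y z & T x [set z] y).
Proof.
split=> [Hjoin x y Y cY Yn0 Txy | H a b c x [acx bcx] Z cZ Zab y Txy].
  apply: contrapT => noz.
  suff : Tarrow T Y (~` [set y]) x by move/(Tarrow_setC1 _ _ cY).
  apply: (compact_local_ideal (P := fun G => Tarrow T G (~` [set y]) x) _ Yn0).
  - exact: subclosed_compact cY compactX (@subsetT _ Y).
  - by move=> A B Ax Bx; apply: Hjoin.
  - by move=> A B AB; apply: subset_Tarrowl.
  move=> z Yz; have nTz : ~ T x [set z] y by move=> Tz; apply: noz; exists z.
  have [U [[oU cU] zU nTU]] := not_T_clopen (closed1 z) nTz.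
  exists U; first exact/open_nbhs_nbhs/(conj oU (zU z erefl)).
  exact/(Tarrow_setC1 _ _ cU).
have [Zn0|Z0] := pselect (Z !=set0); last first.
  by apply: acx _ cZ _ y Txy => z Zz; case: Z0; exists z.
have [z Zz Tz] := H x y Z cZ Zn0 Txy.
case: (Zab z Zz) => [az|bz].
  exact: Tarrow_set1 acx az Tz.
exact: Tarrow_set1 bcx bz Tz.
Qed.

End ConditionalRelation.

Theorem theorem9p9 (X : topologicalType) (T : X -> set X -> X -> Prop)
  (HXT : conditional_space T) :
  (* (T3-star) *)
  ((forall a b c : set X,
      Tarrow T a c `&` Tarrow T b c `<=` Tarrow T (a `|` b) c)
   <-> (forall (x y : X) (Y : set X), closed Y -> Y !=set0 ->
          T x Y y -> exists2 z, Y z & T x [set z] y))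
  /\
  (* (T4) *)
  ((forall a b c : set X, Tarrow T a b `<=` Tarrow T c (Tarrow T a b))
   <-> (forall (x y z : X) (Y Z : set X), closed Y -> closed Z ->
          T x Y y -> T y Z z -> T x Z z))
  /\
  (* (T5) *)
  ((forall a b : set X, a `&` Tarrow T a b `<=` b)
   <-> (forall x : X, T x [set x] x))
  /\
  (* (T6) *)
  ((forall a b : set X, Tarrow T a b `<=` Tarrow T (~` b) (~` a))
   <-> (forall (x y : X) (Y : set X), closed Y ->
          T x Y y -> exists2 z, Y z & T x [set y] z))
  /\
  (* (T7) *)
  ((forall a b c : set X, ~` Tarrow T a b `<=` Tarrow T c (~` Tarrow T a b))
   <-> (forall (x y z : X) (Y Z : set X), closed Y -> closed Z ->
          T x Y y -> T x Z z -> T y Z z))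
  /\
  (* (T8) *)
  ((forall a b c : set X,
      Tarrow T setT (~` a `|` b) `&` Tarrow T b c `<=` Tarrow T a c)
   <-> (forall (x y : X) (Y Z : set X), closed Y -> closed Z ->
          T x Y y -> Tsec T x setT `&` Y `<=` Z -> T x Z y)).
Proof.
have [[compactX hausX _] relT] := HXT.
have closed1 (z : X) : closed [set z].
  exact: @accessible_closed_set1 _ (hausdorff_accessible hausX) z.
split; first exact: T3star_valid_iff relT closed1 compactX.
split; first exact: T4_valid_iff relT.
split; first exact: T5_valid_iff relT closed1.
split; first exact: T6_valid_iff relT closed1.
split; first exact: T7_valid_iff relT.
exact: T8_valid_iff relT.
Qed.
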